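(* Let $C = c_0c_1\dots c_{m-1}c_0$ and $D=(0)(1)\dots(n-1)(0)$ be reflexive digraph cycles with $D$ non-contractible. For any homomorphism $\phi \in \mathrm{Hom}(C,D)$ and any cutback $P = c_a \dots c_b$ of $C$ (with respect to $\phi$), there is a path of up edges in $\mathrm{Hom}(C,D)$ from $\phi$ to the homomorphism $\phi'$ obtained from $\phi$ by setting $\phi'(c_i) = \phi(c_a)$ for all vertices $c_i$ of $P$ (and $\phi'=\phi$ elsewhere).
   Context: A digraph is a binary relation $\to$ on a finite vertex set; a loop is an arc $uu$; reflexive means every vertex has a loop. A digraph cycle $C=c_0c_1\dots c_{m-1}c_0$ (indices mod $m$, $m\ge3$) has underlying graph the cycle with edges $c_ic_{i+1}$. $D=(0)(1)\dots(n-1)(0)$ has vertex set the integers mod $n$. $D$ is non-contractible if it has length at least $4$ or is a directed $3$-cycle. A homomorphism $\phi:C\to D$ satisfies $u\to v \Rightarrow \phi(u)\to\phi(v)$. $\mathrm{Hom}(C,D)$ is the digraph on homomorphisms with $\phi\to\phi'$ iff $\phi(u)\to\phi'(v)$ for all arcs $u\to v$ of $C$; $\phi,\phi'$ are adjacent if $\phi\to\phi'$ or $\phi'\to\phi$. For adjacent $\phi,\phi'$ (with $C$ reflexive) each vertex $c$ has $\phi'(c)\in\{\phi(c),\phi(c)\pm1\}$; $c$ moves up if $\phi'(c)=\phi(c)+1$ and moves down if $\phi'(c)=\phi(c)-1$. The pair $(\phi,\phi')$ is an up edge if they are adjacent and every vertex that moves, moves up. A path of up edges from $\phi$ to $\phi'$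 is a sequence $\phi=\phi_0,\dots,\phi_k=\phi'$ with each $(\phi_{j},\phi_{j+1})$ an up edge. Under $\phi$, edge $c_ic_{i+1}$ is increasing, stationary or decreasing as $\phi(c_{i+1})-\phi(c_i)$ is $1,0,-1$; the increase of a subpath is its number of increasing edges minus its number of decreasing edges. A subpath $P=c_a\dots c_b$ is a cutback (for $\phi$) if its increase is $0$ and the increase of $c_a\dots c_i$ is negative for all $i\in\{a+1,\dots,b-1\}$. *)

From mathcomp Require Import all_boot all_order all_algebra.
Set Implicit Arguments. Unset Strict Implicit. Unset Printing Implicit Defensive.
Import Order.TTheory GRing.Theory Num.Theory.

(* A digraph on the vertex set 'I_m is a relation E : rel 'I_m (u -> v iff E u v).
   Vertex c_i of a cycle is the ordinal i; c_{i+1} is ordS i (indices mod m). *)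

Definition refl_digraph_cycle (m : nat) (E : rel 'I_m) : Prop :=
  [/\ 3 <= m,
      (forall u, E u u),
      (forall u v, u != v -> E u v -> v = ordS u \/ u = ordS v)
    & (forall i, E i (ordS i) \/ E (ordS i) i)].

Definition noncontractible (n : nat) (E : rel 'I_n) : Prop :=
  4 <= n \/
  (n = 3 /\
   ((forall i, E i (ordS i) /\ ~ E (ordS i) i) \/
    (forall i, E (ordS i) i /\ ~ E i (ordS i)))).

Definition is_hom (m n : nat) (EC : rel 'I_m) (ED : rel 'I_n) (phi : 'I_m -> 'I_n) : Prop :=
  forall u v, EC u v -> ED (phi u) (phi v).

Definition hom_arc (m n : nat) (EC : rel 'I_m) (ED : rel 'I_n) (phi psi : 'I_m -> 'I_n) : Prop :=
  forall u v, EC u v -> ED (phi u) (psi v).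

Definition up_edge (m n : nat) (EC : rel 'I_m) (ED : rel 'I_n) (phi psi : 'I_m -> 'I_n) : Prop :=
  [/\ is_hom EC ED phi, is_hom EC ED psi,
      (hom_arc EC ED phi psi \/ hom_arc EC ED psi phi)
    & (forall c, psi c != phi c -> psi c = ordS (phi c))].

Definition cv (m : nat) (a : 'I_m) (t : nat) : 'I_m := iter t (@ordS m) a.

Definition edge_incr (m n : nat) (phi : 'I_m -> 'I_n) (i : 'I_m) : int :=
  if phi (ordS i) == ordS (phi i) then 1%R
  else if phi (ordS i) == ord_pred (phi i) then (-1)%R
  else 0%R.

Definition incr (m n : nat) (phi : 'I_m -> 'I_n) (a : 'I_m) (j : nat) : int :=
  (\sum_(t < j) edge_incr phi (cv a t))%R.

(* The subpath P = c_a ... c_{a+L} (a path: 1 <= L <= m-1) is a cutback for phi. *)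
Definition cutback (m n : nat) (phi : 'I_m -> 'I_n) (a : 'I_m) (L : nat) : Prop :=
  [/\ 0 < L, L < m, incr phi a L = 0%R
    & (forall i, 0 < i -> i < L -> (incr phi a i < 0)%R)].

Definition flatten_cutback (m n : nat) (phi : 'I_m -> 'I_n) (a : 'I_m) (L : nat) : 'I_m -> 'I_n :=
  fun c => if [exists t : 'I_L.+1, c == cv a t] then phi a else phi c.

From mathcomp Require Import all_boot all_order all_algebra.
From mathcomp Require Import zify.
Import Order.TTheory GRing.Theory Num.Theory.
Set Implicit Arguments. Unset Strict Implicit. Unset Printing Implicit Defensive.

(* Along the cutback, phi(c_(a+t)) lies depth(t) steps below phi(c_a), where
   depth(t) is minus the increase of c_a ... c_(a+t); depth vanishes at both ends
   and changes by at most one per edge.  Clipping depth at level d gives maps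
   flood d, with flood (max depth) = phi and flood 0 the flattened map.  Passing
   from level d+1 to level d moves exactly the vertices of depth > d up by one,
   from phi(c_a) - (d+1) to phi(c_a) - d, and all their neighbours already sit
   at one of these two levels; so the arc of D joining the two levels makes
   every such step an up edge. *)

Definition cv_index (m : nat) (a c : 'I_m) : nat := (c + (m - a)) %% m.

Section CycleIndex.
Variables (m : nat) (a : 'I_m).

Lemma val_cv t : val (cv a t) = (a + t) %% m.
Proof.
elim: t => [|t IH]; first by rewrite addn0 modn_small.
by rewrite /cv iterS -/(cv a t) /= IH -addn1 modnDml addn1 addnS.
Qed.

Lemma cv_index_cv t : t < m -> cv_index a (cv a t) = t.
Proof.
move=> tm; rewrite /cv_index val_cv modnDml.
have -> : a + t + (m - a) = t + m by have := ltn_ord a; lia.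
by rewrite modnDr modn_small.
Qed.

Lemma cv_indexK c : cv a (cv_index a c) = c.
Proof.
apply: val_inj; rewrite val_cv /cv_index modnDmr.
have -> : a + (c + (m - a)) = c + m by have := ltn_ord a; lia.
by rewrite modnDr modn_small.
Qed.

Lemma cv_index_lt c : cv_index a c < m.
Proof. by rewrite /cv_index ltn_mod; case: m a c => [[]|]. Qed.

Lemma cv_index_ordS c : cv_index a (ordS c) = (cv_index a c).+1 %% m.
Proof. by rewrite /cv_index /= modnDml -[in RHS]addn1 modnDml addn1 addSn. Qed.

Lemma cv_index_ordS_cases c :
  cv_index a (ordS c) = (cv_index a c).+1 \/
  cv_index a (ordS c) = 0 /\ (cv_index a c).+1 = m.
Proof.
rewrite cv_index_ordS; have := cv_index_lt c.
rewrite leq_eqVlt => /orP[/eqP ->|lt]; first by rewrite modnn; right.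
by rewrite modn_small //; left.
Qed.

Lemma cv_index_nbr c c' :
  0 < cv_index a c -> (cv_index a c).+1 < m ->
  c' = c \/ c' = ordS c \/ c = ordS c' ->
  [\/ cv_index a c' = cv_index a c, cv_index a c' = (cv_index a c).+1
    | cv_index a c = (cv_index a c').+1].
Proof.
move=> c0 cm [->|[->|Ec]]; first by constructor 1.
  by case: (cv_index_ordS_cases c) => [->|]; [constructor 2 | lia].
rewrite {}Ec in c0 cm *.
by case: (cv_index_ordS_cases c') => [->|]; [constructor 3 | lia].
Qed.

Lemma mem_cv_prefix c L : L < m ->
  [exists t : 'I_L.+1, c == cv a t] = (cv_index a c <= L).
Proof.
move=> Lm; apply/existsP/idP => [[t /eqP ->]|cL].
  by rewrite cv_index_cv ?(leq_trans (ltn_ord t)) // -ltnS.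
by exists (Ordinal (cL : cv_index a c < L.+1)); rewrite /= cv_indexK.
Qed.

End CycleIndex.

Lemma refl_cycle_nbr m (E : rel 'I_m) u v :
  refl_digraph_cycle E -> E u v \/ E v u -> v = u \/ v = ordS u \/ u = ordS v.
Proof.
case=> _ _ Ecyc _ Euv; have [->|nvu] := eqVneq v u; first by left.
have nuv : u != v by rewrite eq_sym.
by right; case: Euv => [/(Ecyc _ _ nuv)|/(Ecyc _ _ nvu)] []; auto.
Qed.

Lemma hom_edge_incr0 m n (EC : rel 'I_m) (ED : rel 'I_n) phi i :
  refl_digraph_cycle EC -> refl_digraph_cycle ED -> is_hom EC ED phi ->
  edge_incr phi i = 0%R -> phi (ordS i) = phi i.
Proof.
move=> [_ _ _ ECe] HD hphi.
have Hadj : ED (phi i) (phi (ordS i)) \/ ED (phi (ordS i)) (phi i).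
  by case: (ECe i) => ?; [left | right]; apply: hphi.
rewrite /edge_incr; case: (refl_cycle_nbr HD Hadj) => [//|[->|->]].
  by rewrite eqxx.
by rewrite ordSK eqxx; case: ifP.
Qed.

Lemma is_hom_edgewise m n (EC : rel 'I_m) (ED : rel 'I_n) phi psi :
  refl_digraph_cycle EC -> (forall v, ED v v) -> is_hom EC ED phi ->
  (forall c, (psi c = phi c /\ psi (ordS c) = phi (ordS c)) \/ psi c = psi (ordS c)) ->
  is_hom EC ED psi.
Proof.
move=> HC EDr hphi edge u v Euv.
case: (refl_cycle_nbr HC (or_introl Euv)) => [->|[Ev|Eu]]; first exact: EDr.
  rewrite {}Ev in Euv *.
  by case: (edge u) => [[-> ->]|->]; [exact: hphi | exact: EDr].
rewrite {}Eu in Euv *.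
by case: (edge v) => [[-> ->]|->]; [exact: hphi | exact: EDr].
Qed.

Lemma up_edge_of_step m n (EC : rel 'I_m) (ED : rel 'I_n) phi psi y :
  (forall v, ED v v) -> ED y (ordS y) \/ ED (ordS y) y ->
  is_hom EC ED phi -> is_hom EC ED psi ->
  (forall c, psi c != phi c -> phi c = y /\ psi c = ordS y) ->
  (forall c c', psi c != phi c -> EC c c' \/ EC c' c ->
     phi c' = y \/ phi c' = ordS y) ->
  up_edge EC ED phi psi.
Proof.
move=> EDr Ey hphi hpsi moved nbr; split=> //; last by move=> c /moved[-> ->].
case: Ey => Ey; [left | right] => u v Euv.
  have [->|mv] := eqVneq (psi v) (phi v); first exact: hphi.
  have [_ ->] := moved _ mv.
  by case: (nbr v u mv (or_intror Euv)) => ->; [exact: Ey | exact: EDr].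
have [->|mu] := eqVneq (psi u) (phi u); first exact: hphi.
have [_ ->] := moved _ mu.
by case: (nbr u v mu (or_introl Euv)) => ->; [exact: Ey | exact: EDr].
Qed.

Section Flood.
Variables (m n : nat) (EC : rel 'I_m) (ED : rel 'I_n).
Variables (phi : 'I_m -> 'I_n) (a : 'I_m) (L : nat).
Hypotheses (HC : refl_digraph_cycle EC) (HD : refl_digraph_cycle ED).
Hypotheses (hphi : is_hom EC ED phi) (hcut : cutback phi a L).

Local Notation depth t := `|incr phi a t|%N.

Lemma incrS t : incr phi a t.+1 = (incr phi a t + edge_incr phi (cv a t))%R.
Proof. by rewrite /incr big_ord_recr. Qed.

Lemma incr_le0 t : t <= L -> (incr phi a t <= 0)%R.
Proof.
have [_ _ incrL incr_neg] := hcut; move=> tL.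
have [->|t0] := eqVneq t 0; first by rewrite /incr big_ord0.
have [->|tL'] := eqVneq t L; first by rewrite incrL.
by apply/ltW/incr_neg; lia.
Qed.

Lemma depth0 : depth 0 = 0.
Proof. by rewrite /incr big_ord0. Qed.

Lemma depthL : depth L = 0.
Proof. by have [_ _ -> _] := hcut. Qed.

Lemma depth_step t : t < L ->
  depth t.+1 <= (depth t).+1 /\ depth t <= (depth t.+1).+1.
Proof.
move=> tL; have := incr_le0 tL; have := incr_le0 (ltnW tL).
rewrite incrS /edge_incr; case: eqP => _; first lia.
by case: eqP => _; lia.
Qed.

Lemma phi_cv t : t <= L -> phi (cv a t) = iter (depth t) (@ord_pred n) (phi a).
Proof.
elim: t => [|t IH] tL; first by rewrite depth0.
have := hom_edge_incr0 (i := cv a t) HC HD hphi.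
have := incr_le0 tL; have := incr_le0 (ltnW tL).
rewrite [cv a t.+1]/cv iterS -/(cv a t) !incrS /edge_incr IH; last exact: ltnW.
set x := incr phi a t.
case: eqP => [-> le0 le1 _|_].
  have -> : `|x|%N = (`|(x + 1)%R|%N).+1 by lia.
  by rewrite iterS ord_predK.
case: eqP => [-> le0 le1 _|_ _ _ step].
  by have -> : `|(x - 1)%R|%N = (`|x|%N).+1 by lia.
by rewrite step // addr0.
Qed.

Definition flood d c :=
  if cv_index a c <= L then iter (minn (depth (cv_index a c)) d) (@ord_pred n) (phi a)
  else phi c.

Definition max_depth := \max_(t < L.+1) depth t.

Lemma L_lt_m : L < m.
Proof. by have [] := hcut. Qed.

Lemma flood_cv d t : t <= L -> depth t <= d -> flood d (cv a t) = phi (cv a t).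
Proof.
move=> tL td; have tm : t < m by apply: leq_ltn_trans L_lt_m.
by rewrite /flood cv_index_cv // tL (minn_idPl td) phi_cv.
Qed.

Lemma flood_max_depth : flood max_depth =1 phi.
Proof.
move=> c; have [tL|Lt] := leqP (cv_index a c) L; last by rewrite /flood leqNgt Lt.
rewrite -(cv_indexK a c) flood_cv //.
exact: (leq_bigmax (Ordinal (tL : _ < L.+1))).
Qed.

Lemma flood0 : flood 0 =1 flatten_cutback phi a L.
Proof.
by move=> c; rewrite /flood /flatten_cutback mem_cv_prefix ?L_lt_m // minn0.
Qed.

Lemma flood_outside d c : ~~ (0 < cv_index a c < L) -> flood d c = phi c.
Proof.
move=> out; have [tL|Lt] := leqP (cv_index a c) L; last by rewrite /flood leqNgt Lt.
rewrite -(cv_indexK a c) flood_cv //.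
have [->|->] : cv_index a c = 0 \/ cv_index a c = L by lia.
  by rewrite depth0.
by rewrite depthL.
Qed.

Lemma flood_edge d c :
  (flood d c = phi c /\ flood d (ordS c) = phi (ordS c)) \/ flood d c = flood d (ordS c).
Proof.
have Lm := L_lt_m.
have [t tm ->] : exists2 t, t < m & c = cv a t.
  by exists (cv_index a c); rewrite ?cv_index_lt ?cv_indexK.
have [tL|Lt] := ltnP t L; last first.
  left; split; apply: flood_outside; first by rewrite cv_index_cv //; lia.
  by case: (cv_index_ordS_cases a (cv a t)) => [|[]] ->; rewrite cv_index_cv //; lia.
have Es : ordS (cv a t) = cv a t.+1 by [].
have tm' : t.+1 < m by apply: leq_ltn_trans Lm.
have [deep|shallow] := boolP ((d < depth t) || (d < depth t.+1)).
  right; rewrite Es /flood !cv_index_cv // (ltnW tL) tL; congr iter.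
  by have := depth_step tL; lia.
by left; rewrite Es !flood_cv //; lia.
Qed.

Lemma flood_hom d : is_hom EC ED (flood d).
Proof. by apply: is_hom_edgewise HC _ hphi (flood_edge d); case: HD. Qed.

Lemma flood_moved d c : flood d c != flood d.+1 c ->
  [/\ 0 < cv_index a c < L, d < depth (cv_index a c),
      flood d.+1 c = iter d.+1 (@ord_pred n) (phi a)
    & flood d c = ordS (iter d.+1 (@ord_pred n) (phi a))].
Proof.
move=> moved; case: (boolP (0 < cv_index a c < L)) => [inside|out]; last first.
  by rewrite !flood_outside ?eqxx in moved.
have tL : cv_index a c <= L by case/andP: inside => _ /ltnW.
have deep : d < depth (cv_index a c).
  rewrite ltnNge; apply: contra moved => shallow.
  by rewrite /flood tL (minn_idPl shallow) (minn_idPl (leqW shallow)).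
split=> //; first by rewrite /flood tL (minn_idPr deep).
by rewrite /flood tL (minn_idPr (ltnW deep)) iterS ord_predK.
Qed.

Lemma flood_moved_nbr d c c' : flood d c != flood d.+1 c -> EC c c' \/ EC c' c ->
  flood d.+1 c' = iter d.+1 (@ord_pred n) (phi a) \/
  flood d.+1 c' = ordS (iter d.+1 (@ord_pred n) (phi a)).
Proof.
move=> /flood_moved [/andP[t0 tL] deep _ _] /(refl_cycle_nbr HC) nbr.
have [t'L near] : cv_index a c' <= L /\ d <= depth (cv_index a c').
  case: (cv_index_nbr t0 (leq_ltn_trans tL L_lt_m) nbr) => Et.
  - by rewrite Et; split; lia.
  - by have := depth_step tL; rewrite Et; split; lia.
  - have t'L : cv_index a c' < L by lia.
    by have := depth_step t'L; rewrite -Et; split; lia.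
rewrite /flood t'L; have [lt|ge] := ltnP d (depth (cv_index a c')).
  by left; rewrite (minn_idPr lt).
right; have -> : minn (depth (cv_index a c')) d.+1 = d by lia.
by rewrite iterS ord_predK.
Qed.

Lemma flood_up_edge d : up_edge EC ED (flood d.+1) (flood d).
Proof.
have [_ EDr _ EDe] := HD.
apply: (up_edge_of_step (y := iter d.+1 (@ord_pred n) (phi a))) => //.
- exact: flood_hom.
- exact: flood_hom.
- by move=> c /flood_moved[].
- exact: flood_moved_nbr.
Qed.

End Flood.

Theorem lemma2p2 (m n : nat) (EC : rel 'I_m) (ED : rel 'I_n)
    (phi : 'I_m -> 'I_n) (a : 'I_m) (L : nat) :
  refl_digraph_cycle EC -> refl_digraph_cycle ED -> noncontractible ED ->
  is_hom EC ED phi -> cutback phi a L ->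
  exists (k : nat) (f : nat -> 'I_m -> 'I_n),
    [/\ f 0 =1 phi, f k =1 flatten_cutback phi a L
      & forall j, j < k -> up_edge EC ED (f j) (f j.+1)].
Proof.
move=> HC HD _ hphi hcut; set K := max_depth phi a L.
exists K, (fun j => flood phi a L (K - j)); split.
- by move=> c; rewrite subn0 (flood_max_depth HC HD hphi hcut).
- by move=> c; rewrite subnn (flood0 hcut).
move=> j lt_jK; rewrite (_ : K - j = (K - j.+1).+1); last by lia.
exact: flood_up_edge.
Qed.
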